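(* Let $n\geq2$. Every nonzero homogeneous harmonic polynomial $h$ on $\mathbb{R}^{n+1}$ which is $(n+2)$-symmetric and satisfies $\int_{B_1}h(y)\,dy=0$ has degree at least $3$.
   Context: Fix $n+2$ points $q_1,\dots,q_{n+2}\in\mathbb{S}^n\subset\mathbb{R}^{n+1}$ spread evenly on $\mathbb{S}^n$ (vertices of an inscribed regular simplex). $\mathcal{S}_{n+2}(q)$ is the set of rotations $\phi\in SO(n+1)$ mapping $\{q_1,\dots,q_{n+2}\}$ onto itself; $h$ is $(n+2)$-symmetric if $h\circ\phi=h$ for all $\phi\in\mathcal{S}_{n+2}(q)$. $B_1$ is the unit ball of $\mathbb{R}^{n+1}$. *)

From HB Require Import structures.
From mathcomp Require Import all_boot all_order all_algebra.
From mathcomp Require Import mpoly.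
From mathcomp Require Import all_classical all_reals all_analysis.

Set Implicit Arguments.
Unset Strict Implicit.
Unset Printing Implicit Defensive.

Import Order.TTheory GRing.Theory Num.Theory.
Local Open Scope classical_set_scope.
Local Open Scope ring_scope.

Section Defs.
Variable R : realType.

Definition dotv (k : nat) (u v : 'rV[R]_k) : R := (u *m v^T) 0 0.

(* q_1..q_{n+2} are the vertices of a regular simplex inscribed in S^n
   (unit vectors with pairwise inner product -1/(n+1)). *)
Definition regular_simplex (n : nat) (q : 'I_n.+2 -> 'rV[R]_n.+1) : Prop :=
  forall i j : 'I_n.+2,
    dotv (q i) (q j) = if i == j then 1 else - (n.+1%:R)^-1.

Definition is_rotation (k : nat) (M : 'M[R]_k) : Prop :=
  M *m M^T = 1%:M /\ \det M = 1.

Definition simplex_sym (n : nat) (q : 'I_n.+2 -> 'rV[R]_n.+1)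
  (M : 'M[R]_n.+1) : Prop :=
  is_rotation M /\ (fun x => x *m M) @` range q = range q.

Definition peval (k : nat) (h : mpoly.mpoly k R) (x : 'rV[R]_k) : R :=
  mpoly.meval (fun i => x 0 i) h.

Definition simplex_symmetric (n : nat) (q : 'I_n.+2 -> 'rV[R]_n.+1)
  (h : mpoly.mpoly n.+1 R) : Prop :=
  forall M, simplex_sym q M -> forall x, peval h (x *m M) = peval h x.

Definition harmonic_poly (k : nat) (h : mpoly.mpoly k R) : Prop :=
  \sum_(i < k) mpoly.mderiv i (mpoly.mderiv i h) = 0.

Definition homog_poly (k : nat) (d : nat) (h : mpoly.mpoly k R) : Prop :=
  h \is @mpoly.ishomog1 k R d (mpoly.mpoly_mdeg__canonical__mpoly_Measure k).

(* Integral over the closed ball {|x|^2 <= rho} of R^k, written as the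
   iterated (Fubini) Lebesgue integral:
   int_{|x_1| <= sqrt rho} int_{ball of R^(k-1), radius^2 rho - x_1^2} ... *)
Fixpoint ball_integral (k : nat) (rho : R) (g : seq R -> R) : R :=
  match k with
  | 0 => g [::]
  | k'.+1 =>
      Rintegral (@lebesgue_measure R) `[- Num.sqrt rho, Num.sqrt rho]
        (fun t => ball_integral k' (rho - t ^+ 2) (fun s => g (t :: s)))
  end.

Definition int_unit_ball (k : nat) (h : mpoly.mpoly k R) : R :=
  ball_integral k 1 (fun s => mpoly.meval (fun i : 'I_k => nth 0 s i) h).

End Defs.

From HB Require Import structures.
From mathcomp Require Import all_boot all_order all_algebra.
From mathcomp Require Import mpoly.
From mathcomp Require Import all_classical all_reals all_analysis.
From mathcomp Require Import fingroup perm.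
From mathcomp Require Import measurable_realfun ring lra.

Set Implicit Arguments.
Unset Strict Implicit.
Unset Printing Implicit Defensive.

Import Order.TTheory GRing.Theory Num.Theory.
Local Open Scope classical_set_scope.
Local Open Scope ring_scope.

(* A homogeneous polynomial of degree 0, 1 or 2 is a constant c, a linear form <x, c>, or a
   quadratic form x A x^T.  Each 3-cycle of the vertices of the simplex is induced by a rotation
   (the vertices span R^(n+1), and the cube of the induced map fixes them), and for n >= 2 the
   3-cycles act transitively on vertices and on ordered pairs of distinct vertices.  So a
   symmetric linear form is constant on the vertices, which sum to 0, hence vanishes; the
   symmetric part of a symmetric quadratic form is a multiple of the identity, and harmonicity
   (trace 0) kills it.  A nonzero constant has nonzero integral over the ball. *)

Section BallVolume.
Variable R : realType.
Notation mu := (@lebesgue_measure R).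

Definition ball_volume (k : nat) (rho : R) : R := ball_integral k rho (fun _ => 1).

Lemma ball_volumeS k rho : ball_volume k.+1 rho =
  Rintegral mu `[- Num.sqrt rho, Num.sqrt rho] (fun t => ball_volume k (rho - t ^+ 2)).
Proof. by []. Qed.

Lemma lebesgue_measure_itv_lty (a b : R) : (mu `[a, b] < +oo)%E.
Proof. by rewrite lebesgue_measure_itv /=; case: ifP => _ //; rewrite -EFinD ltry. Qed.

Lemma itv_integrable_cst (c a b : R) : mu.-integrable `[a, b] (EFin \o cst c).
Proof.
apply: measurable_bounded_integrable.
- exact: measurable_itv.
- exact: lebesgue_measure_itv_lty.
- exact: measurable_cst.
exists `|c|; split; first by rewrite num_real.
by move=> M cM x _ /=; rewrite ltW.
Qed.

Lemma itv_integrable_slice (V : R -> R) (rho a b : R) :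
  {homo V : x y / x <= y} -> (forall x, 0 <= V x) ->
  mu.-integrable `[a, b] (EFin \o (fun t => V (rho - t ^+ 2))).
Proof.
move=> Vmono Vge0; apply: measurable_bounded_integrable.
- exact: measurable_itv.
- exact: lebesgue_measure_itv_lty.
- apply: measurable_funTS; apply: measurableT_comp.
    exact: nondecreasing_measurable.
  by apply: measurable_funB; [exact: measurable_cst | exact: exprn_measurable].
exists (V rho); split; first by rewrite num_real.
move=> M VM x _ /=; rewrite (ger0_norm (Vge0 _)) (le_trans _ (ltW VM)) // Vmono //.
by rewrite lerBlDr lerDl sqr_ge0.
Qed.

Lemma ge0_subset_Rintegral (f : R -> R) (a1 b1 a2 b2 : R) :
  mu.-integrable `[a2, b2] (EFin \o f) -> (forall x, 0 <= f x) ->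
  `[a1, b1] `<=` `[a2, b2] ->
  Rintegral mu `[a1, b1] f <= Rintegral mu `[a2, b2] f.
Proof.
move=> f_int f_ge0 sub12; have mitv (a b : R) := measurable_itv `[a, b].
rewrite /Rintegral fine_le //.
- by apply: integrable_fin_num => //; exact: integrableS f_int.
- exact: integrable_fin_num.
apply: ge0_subset_integral => //; first by case/integrableP: f_int.
by move=> x _; rewrite lee_fin f_ge0.
Qed.

Lemma ball_volume_ge0 k rho : 0 <= ball_volume k rho.
Proof.
elim: k rho => [|k IHk] rho //=; rewrite ball_volumeS.
by apply: Rintegral_ge0 => t _; exact: IHk.
Qed.

Lemma ball_volume_le0 k rho : rho <= 0 -> ball_volume k.+1 rho = 0.
Proof.
move=> rho_le0; rewrite ball_volumeS.
have -> : Num.sqrt rho = 0 by apply/eqP; rewrite sqrtr_eq0.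
by rewrite oppr0 set_itv1 Rintegral_set1.
Qed.

Lemma ball_volume_homo k : {homo ball_volume k : x y / x <= y}.
Proof.
elim: k => [//|k IHk] a b ab.
have [a_le0|a_gt0] := leP a 0; first by rewrite ball_volume_le0 // ball_volume_ge0.
have slice_int (r u v : R) := itv_integrable_slice r u v IHk (@ball_volume_ge0 k).
rewrite !ball_volumeS; apply: (le_trans _ (ge0_subset_Rintegral (a1 := - Num.sqrt a)
  (b1 := Num.sqrt a) (slice_int _ _ _) (fun _ => ball_volume_ge0 _ _) _)).
  apply: le_Rintegral; [exact: measurable_itv | exact: slice_int | exact: slice_int |].
  by move=> t _ /=; apply: IHk; lra.
have : Num.sqrt a <= Num.sqrt b by rewrite ler_sqrt //; lra.
by move=> sab t /=; rewrite !in_itv /= => /andP[? ?]; apply/andP; split; lra.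
Qed.

(* For |t| <= sqrt(rho) / 2 the slice at t has squared radius rho - t^2 >= 3 rho / 4. *)
Lemma ball_volume_gt0 k rho : 0 < rho -> 0 < ball_volume k rho.
Proof.
elim: k rho => [//|k IHk] rho rho_gt0; rewrite ball_volumeS.
have slice_int (r u v : R) :=
  itv_integrable_slice r u v (@ball_volume_homo k) (@ball_volume_ge0 k).
set s := Num.sqrt rho.
have s_gt0 : 0 < s by rewrite sqrtr_gt0.
have s2 : s ^+ 2 = rho by rewrite sqr_sqrtr // ltW.
set v := ball_volume k (rho * 3 / 4).
have v_gt0 : 0 < v by apply: IHk; lra.
apply: lt_le_trans (ge0_subset_Rintegral (a1 := - (s / 2)) (b1 := s / 2) _ _ _).
- apply: (@lt_le_trans _ _ (Rintegral mu `[- (s / 2), s / 2] (cst v))).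
    rewrite Rintegral_cst; last exact: measurable_itv.
    have := lebesgue_measure_itv `[- (s / 2), s / 2]%R; rewrite /=.
    have -> : ((- (s / 2))%:E < (s / 2)%:E)%E by rewrite lte_fin; lra.
    by move=> ->; rewrite -EFinD /=; apply: mulr_gt0 => //; lra.
  apply: le_Rintegral; [exact: measurable_itv | exact: itv_integrable_cst | exact: slice_int |].
  move=> t /=; rewrite in_itv /= => /andP[? ?]; apply: ball_volume_homo; nra.
- exact: slice_int.
- by move=> t; exact: ball_volume_ge0.
by move=> t /=; rewrite !in_itv /= => /andP[? ?]; apply/andP; split; lra.
Qed.

Lemma ball_integral_cst k c rho : ball_integral k rho (fun _ => c) = c * ball_volume k rho.
Proof.
elim: k rho => [|k IHk] rho /=; first by rewrite mulr1.
under eq_Rintegral do rewrite IHk.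
by rewrite RintegralZl //; apply: itv_integrable_slice;
  [exact: ball_volume_homo | exact: ball_volume_ge0].
Qed.

End BallVolume.

Section DotProduct.
Variables (R : realType) (k : nat).
Implicit Types (x y z : 'rV[R]_k) (A : 'M[R]_k).

Lemma dotvE x y : dotv x y = \sum_j x 0 j * y 0 j.
Proof. by rewrite /dotv mxE; apply: eq_bigr => j _; rewrite mxE. Qed.

Lemma dotvC x y : dotv x y = dotv y x.
Proof. by rewrite !dotvE; apply: eq_bigr => j _; rewrite mulrC. Qed.

Lemma dotvDl x y z : dotv (x + y) z = dotv x z + dotv y z.
Proof. by rewrite !dotvE -big_split; apply: eq_bigr => j _; rewrite mxE mulrDl. Qed.

Lemma dotvDr x y z : dotv z (x + y) = dotv z x + dotv z y.
Proof. by rewrite dotvC dotvDl !(dotvC z). Qed.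

Lemma dotvZl (a : R) x y : dotv (a *: x) y = a * dotv x y.
Proof. by rewrite !dotvE mulr_sumr; apply: eq_bigr => j _; rewrite mxE mulrA. Qed.

Lemma dot0v x : dotv 0 x = 0.
Proof. by rewrite dotvE big1 // => j _; rewrite mxE mul0r. Qed.

Lemma dotv_suml (I : finType) (F : I -> 'rV[R]_k) y :
  dotv (\sum_i F i) y = \sum_i dotv (F i) y.
Proof.
rewrite dotvE; under eq_bigr do rewrite summxE mulr_suml.
by rewrite exchange_big; apply: eq_bigr => i _; rewrite dotvE.
Qed.

Lemma dotv_sumr (I : finType) (F : I -> 'rV[R]_k) y :
  dotv y (\sum_i F i) = \sum_i dotv y (F i).
Proof. by rewrite dotvC dotv_suml; apply: eq_bigr => i _; rewrite dotvC. Qed.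

Lemma dotv_mul_trmx x y A : dotv (x *m A^T) y = dotv (y *m A) x.
Proof.
rewrite !dotvE; under eq_bigr do rewrite mxE mulr_suml.
under [RHS]eq_bigr do rewrite mxE mulr_suml.
by rewrite exchange_big; apply: eq_bigr => i _; apply: eq_bigr => j _; rewrite mxE; ring.
Qed.

Lemma mulmx_trmxE (X Y : 'M[R]_k) i j : (X *m Y^T) i j = dotv (row i X) (row j Y).
Proof. by rewrite mxE dotvE; apply: eq_bigr => l _; rewrite !mxE. Qed.

Lemma dotv_polarize A x y :
  dotv (x *m (A + A^T)) y = dotv ((x + y) *m A) (x + y) - dotv (x *m A) x - dotv (y *m A) y.
Proof. by rewrite mulmxDr dotvDl dotv_mul_trmx mulmxDl !dotvDl !dotvDr; ring. Qed.

Lemma dotv_eq0 x : dotv x x = 0 -> x = 0.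
Proof.
rewrite dotvE => /eqP; rewrite psumr_eq0 => [/allP x_eq0|j _]; last first.
  by rewrite -expr2 sqr_ge0.
apply/rowP => j; rewrite mxE.
by have := x_eq0 j (mem_index_enum j); rewrite /= mulf_eq0 orbb => /eqP.
Qed.

End DotProduct.

Section HomogeneousPolynomials.
Variables (R : realType) (k : nat).
Implicit Types (h p : {mpoly R[k]}) (A : 'M[R]_k).

Definition linear_mpoly (c : 'rV[R]_k) : {mpoly R[k]} := \sum_i c 0 i *: 'X_i.

Lemma linear_mpoly0 : linear_mpoly 0 = 0.
Proof. by rewrite /linear_mpoly big1 // => i _; rewrite mxE scale0r. Qed.

Definition quadratic_mpoly A : {mpoly R[k]} := \sum_i \sum_j A i j *: ('X_i * 'X_j).

Lemma homog_poly_ind (P : {mpoly R[k]} -> Prop) d h :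
  P 0 -> (forall p q, P p -> P q -> P (p + q)) -> (forall c p, P p -> P (c *: p)) ->
  (forall m, mdeg m = d -> P 'X_[m]) -> homog_poly d h -> P h.
Proof.
move=> P0 PD PZ PX hd; rewrite (mpolyE h) big_seq.
by apply: big_ind => // m mh; apply/PZ/PX; exact: (dhomog_mf hd mh).
Qed.

Lemma mdeg2P (m : 'X_{1..k}) : mdeg m = 2 -> exists i j, m = (U_(i) + U_(j))%MM.
Proof.
move=> m2; have [i mi] : exists i, (0 < m i)%N.
  apply/existsP; apply: contraT; rewrite negb_exists => /forallP m_eq0.
  suff m0 : m = 0%MM by move: m2; rewrite m0 mdeg0.
  by apply/mnmP => i; rewrite mnm0E; have := m_eq0 i; rewrite -leqNgt leqn0 => /eqP.
have Ui_le : (U_(i) <= m)%MM by apply/mnm_lepP => j; rewrite mnm1E; case: eqP => [<-|].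
have mE := submK Ui_le.
have : mdeg (m - U_(i))%MM = 1 by move: m2; rewrite -{1}mE mdegD mdeg1 addn1 => -[].
by move/eqP/mdeg1P => [j /eqP mj]; exists j, i; rewrite -mE mj.
Qed.

Lemma homog0_mpolyC h : homog_poly 0 h -> exists c, h = c%:MP.
Proof.
apply: (homog_poly_ind (P := fun p => exists c, p = c%:MP)).
- by exists 0; rewrite mpolyC0.
- by move=> p q [c ->] [c' ->]; exists (c + c'); rewrite mpolyCD.
- by move=> a p [c ->]; exists (a * c); rewrite mpolyCM mul_mpolyC.
- by move=> m /eqP; rewrite mdeg_eq0 => /eqP ->; exists 1; rewrite mpolyX0.
Qed.

Lemma homog1_linear h : homog_poly 1 h -> exists c, h = linear_mpoly c.
Proof.
apply: (homog_poly_ind (P := fun p => exists c, p = linear_mpoly c)).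
- by exists 0; rewrite linear_mpoly0.
- move=> p q [c ->] [c' ->]; exists (c + c').
  by rewrite /linear_mpoly -big_split; apply: eq_bigr => i _; rewrite mxE scalerDl.
- move=> a p [c ->]; exists (a *: c).
  by rewrite /linear_mpoly scaler_sumr; apply: eq_bigr => i _; rewrite mxE scalerA.
- move=> m /eqP/mdeg1P [i /eqP ->]; exists (\row_j (j == i)%:R).
  rewrite /linear_mpoly (bigD1 i) //= big1 => [|j ji]; first by rewrite mxE eqxx scale1r addr0.
  by rewrite mxE (negbTE ji) scale0r.
Qed.

Lemma homog2_quadratic h : homog_poly 2 h -> exists A, h = quadratic_mpoly A.
Proof.
apply: (homog_poly_ind (P := fun p => exists A, p = quadratic_mpoly A)).
all: rewrite /quadratic_mpoly.
- by exists 0; rewrite big1 // => i _; rewrite big1 // => j _; rewrite mxE scale0r.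
- move=> p q [A ->] [B ->]; exists (A + B).
  rewrite -big_split; apply: eq_bigr => i _.
  by rewrite -big_split; apply: eq_bigr => j _; rewrite mxE scalerDl.
- move=> a p [A ->]; exists (a *: A).
  rewrite scaler_sumr; apply: eq_bigr => i _.
  by rewrite scaler_sumr; apply: eq_bigr => j _; rewrite mxE scalerA.
- move=> m /mdeg2P [i [j ->]]; exists (\matrix_(a, b) ((a == i) && (b == j))%:R).
  rewrite (bigD1 i) //= [X in _ + X]big1 => [|a ai]; last first.
    by rewrite big1 // => b _; rewrite mxE (negbTE ai) scale0r.
  rewrite addr0 (bigD1 j) //= [X in _ + X]big1 => [|b bj]; last first.
    by rewrite mxE (negbTE bj) andbF scale0r.
  by rewrite mxE !eqxx scale1r addr0 mpolyXD.
Qed.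

Lemma peval_linear c x : peval (linear_mpoly c) x = dotv x c.
Proof.
rewrite /peval raddf_sum dotvE; apply: eq_bigr => i _.
by rewrite /= mevalZ mevalXU mulrC.
Qed.

Lemma peval_quadratic A x : peval (quadratic_mpoly A) x = dotv (x *m A) x.
Proof.
rewrite /peval raddf_sum dotvE.
under [RHS]eq_bigr do rewrite mxE mulr_suml.
rewrite [RHS]exchange_big; apply: eq_bigr => i _ /=.
rewrite raddf_sum; apply: eq_bigr => j _.
by rewrite /= mevalZ mevalM !mevalXU; ring.
Qed.

Lemma mcoeff_quadratic_diag A i : (quadratic_mpoly A)@_(U_(i) + U_(i)) = A i i.
Proof.
have UUE (a b : 'I_k) : ((U_(a) + U_(b))%MM == (U_(i) + U_(i))%MM) = (a == i) && (b == i).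
  apply/eqP/andP => [abi|[/eqP -> /eqP ->] //].
  have := congr1 (fun m : 'X_{1..k} => m i) abi; rewrite !mnmDE !mnm1E eqxx.
  by case: (a == i); case: (b == i).
rewrite raddf_sum (bigD1 i) //= [X in _ + X]big1 => [|a ai]; last first.
  rewrite raddf_sum big1 // => b _.
  by rewrite /= mcoeffZ -mpolyXD mcoeffX UUE (negbTE ai) mulr0.
rewrite addr0 raddf_sum (bigD1 i) //= [X in _ + X]big1 => [|b bi]; last first.
  by rewrite /= mcoeffZ -mpolyXD mcoeffX UUE (negbTE bi) andbF mulr0.
by rewrite /= mcoeffZ -mpolyXD mcoeffX UUE eqxx mulr1 addr0.
Qed.

Lemma mcoeff0_mderiv2 h i : (h^`M(i)^`M(i))@_0 = h@_(U_(i) + U_(i)) *+ 2.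
Proof. by rewrite !mcoeff_mderiv add0m mnm0E mnm1E eqxx -mulrnA. Qed.

Lemma harmonic_quadratic_trace A : harmonic_poly (quadratic_mpoly A) -> \tr A = 0.
Proof.
move=> /(congr1 (mcoeff 0%MM)); rewrite raddf_sum /= mcoeff0 => lap0.
have : \sum_i A i i *+ 2 = 0.
  by rewrite -[RHS]lap0; apply: eq_bigr => i _; rewrite mcoeff0_mderiv2 mcoeff_quadratic_diag.
by rewrite sumrMnl => /eqP; rewrite mulrn_eq0 => /eqP.
Qed.

Lemma quadratic_mpoly_skew A : A + A^T = 0 -> quadratic_mpoly A = 0.
Proof.
move=> A_skew; set P := quadratic_mpoly A.
have PN : P = - P.
  rewrite {1}/P /quadratic_mpoly exchange_big /= -sumrN; apply: eq_bigr => i _.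
  rewrite -sumrN; apply: eq_bigr => j _.
  have := congr1 (fun M : 'M[R]_k => M i j) A_skew; rewrite !mxE => /eqP.
  by rewrite addrC addr_eq0 => /eqP ->; rewrite scaleNr mulrC.
have : 2%:R *: P = 0 by rewrite scaler_nat mulr2n {2}PN subrr.
by move/eqP; rewrite scaler_eq0 pnatr_eq0 => /eqP.
Qed.

End HomogeneousPolynomials.

Section ThreeCycles.
Variable N : nat.
Implicit Types a b c i j t : 'I_N.

Definition cycle3 a b c : {perm 'I_N} := (tperm a b * tperm a c)%g.

Section Distinct.
Variables a b c : 'I_N.
Hypotheses (ab : a != b) (ac : a != c) (bc : b != c).

Lemma cycle3_a : cycle3 a b c a = b.
Proof. by rewrite permM tpermL tpermD // eq_sym. Qed.

Lemma cycle3_b : cycle3 a b c b = c.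
Proof. by rewrite permM tpermR tpermL. Qed.

Lemma cycle3_c : cycle3 a b c c = a.
Proof. by rewrite permM (tpermD ac) ?tpermR // eq_sym. Qed.

Lemma cycle3_fix i : i != a -> i != b -> i != c -> cycle3 a b c i = i.
Proof. by move=> ia ib ic; rewrite permM !tpermD // eq_sym. Qed.

Lemma cycle3_order3 i : cycle3 a b c (cycle3 a b c (cycle3 a b c i)) = i.
Proof.
have [->|ia] := eqVneq i a; first by rewrite cycle3_a cycle3_b cycle3_c.
have [->|ib] := eqVneq i b; first by rewrite cycle3_b cycle3_c cycle3_a.
have [->|ic] := eqVneq i c; first by rewrite cycle3_c cycle3_a cycle3_b.
by rewrite !cycle3_fix.
Qed.

End Distinct.

Lemma exists_notin (s : seq 'I_N) : (size s < N)%N -> exists t, t \notin s.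
Proof.
move=> s_small; case: (pickP [pred t | t \notin s]) => [t ht|all_in]; first by exists t.
suff : (N <= size s)%N by rewrite leqNgt s_small.
rewrite -[X in (X <= _)%N]size_enum_ord; apply: uniq_leq_size; first exact: enum_uniq.
by move=> t _; have := all_in t; rewrite /= => /negbFE.
Qed.

Variable T : Type.

Lemma cycle3_invariant_const (f : 'I_N -> T) : (2 < N)%N ->
  (forall a b c, a != b -> a != c -> b != c -> forall i, f (cycle3 a b c i) = f i) ->
  forall i j, f i = f j.
Proof.
move=> N_gt2 f_inv i j; have [->//|ij] := eqVneq i j.
have [t] := @exists_notin [:: i; j] N_gt2; rewrite !inE negb_or => /andP[ti tj].
by rewrite -(f_inv i j t) ?cycle3_a // eq_sym.
Qed.

(* Move one end of the pair at a time, by a 3-cycle through a fourth point. *)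
Lemma cycle3_invariant_offdiag (g : 'I_N -> 'I_N -> T) : (3 < N)%N ->
  (forall i j, g i j = g j i) ->
  (forall a b c, a != b -> a != c -> b != c ->
     forall i j, g (cycle3 a b c i) (cycle3 a b c j) = g i j) ->
  forall i j i' j', i != j -> i' != j' -> g i j = g i' j'.
Proof.
move=> N_gt3 g_sym g_inv.
have move_fst i i' j : i != j -> i' != j -> g i j = g i' j.
  move=> ij i'j; have [->//|ii'] := eqVneq i i'.
  have [t] := @exists_notin [:: i; i'; j] N_gt3.
  rewrite !inE !negb_or => /and3P[ti ti' tj].
  have [it i't] : i != t /\ i' != t by rewrite !(eq_sym _ t).
  have fix_j : cycle3 i i' t j = j by rewrite cycle3_fix // eq_sym.
  by rewrite -(g_inv i i' t) // cycle3_a // fix_j.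
have move_snd i j j' : i != j -> i != j' -> g i j = g i j'.
  by move=> ij ij'; rewrite g_sym [RHS]g_sym; apply: move_fst; rewrite eq_sym.
move=> i j i' j' ij i'j'; have [j_eq|i'j] := eqVneq i' j; last first.
  by rewrite (move_fst i i' j) // (move_snd i' j j').
by move: ij; rewrite -j_eq => ii'; rewrite g_sym (move_snd i' i j') // eq_sym.
Qed.

End ThreeCycles.

Section RegularSimplex.
Variables (R : realType) (n : nat) (q : 'I_n.+2 -> 'rV[R]_n.+1).
Hypothesis hq : regular_simplex q.

Lemma regular_simplex_sum : \sum_i q i = 0.
Proof.
apply: dotv_eq0; rewrite dotv_suml big1 // => i _; rewrite dotv_sumr.
under eq_bigr do rewrite hq.
rewrite (bigD1 i) //= eqxx (eq_bigr (fun _ => - (n.+1%:R)^-1)) => [|j ji]; last first.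
  by rewrite eq_sym (negbTE ji).
by rewrite sumr_const cardC1 card_ord /= mulNrn -[_ *+ n.+1]mulr_natr mulVf ?pnatr_eq0 // subrr.
Qed.

Definition widen_last (i : 'I_n.+1) : 'I_n.+2 := widen_ord (leqnSn _) i.

Lemma widen_last_inj : injective widen_last.
Proof. by move=> i j /(congr1 val) /= /val_inj. Qed.

Lemma ord_last_or_widen (i : 'I_n.+2) : i = ord_max \/ exists j, i = widen_last j.
Proof.
have [->|i_neq] := eqVneq i ord_max; [by left | right].
have i_lt : (i < n.+1)%N.
  by rewrite -ltnS ltn_neqAle ltn_ord andbT; move: i_neq; rewrite -val_eqE.
by exists (Ordinal i_lt); apply: val_inj.
Qed.

Definition vertex_matrix (f : 'I_n.+1 -> 'I_n.+2) : 'M[R]_n.+1 := \matrix_(i, j) q (f i) 0 j.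

Definition simplex_frame := vertex_matrix widen_last.

Definition simplex_gram : 'M[R]_n.+1 := \matrix_(i, j) (if i == j then 1 else - (n.+1%:R)^-1).

Lemma row_vertex_matrix f i : row i (vertex_matrix f) = q (f i).
Proof. by apply/rowP => j; rewrite !mxE. Qed.

Lemma vertex_matrix_gram f : injective f -> vertex_matrix f *m (vertex_matrix f)^T = simplex_gram.
Proof.
move=> f_inj; apply/matrixP => i j.
by rewrite mulmx_trmxE !row_vertex_matrix hq (inj_eq f_inj) mxE.
Qed.

(* The Gram matrix is (1 + 1/(n+1)) I - J/(n+1), with J the all-ones matrix and J^2 = (n+1) J. *)
Lemma simplex_gram_mul : simplex_gram *m (1%:M + const_mx 1) = (n.+2%:R / n.+1%:R)%:M.
Proof.
apply/matrixP => i k; rewrite !mxE.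
under eq_bigr do rewrite !mxE mulrDr mulr1 mulr_natr.
rewrite big_split /= (bigD1 k) //= big1 => [|j jk]; last by rewrite (negbTE jk) mulr0n.
rewrite eqxx mulr1n addr0 (bigD1 i) //= eqxx.
rewrite (eq_bigr (fun _ => - (n.+1%:R)^-1)) => [|j ji]; last by rewrite eq_sym (negbTE ji).
rewrite sumr_const cardC1 card_ord /= mulNrn -[_ *+ n]mulr_natr -[_ *+ (i == k)]mulr_natr.
have n1_inv : (n.+1%:R)^-1 * n.+1%:R = 1 :> R by rewrite mulVf ?pnatr_eq0.
have n1E : n.+1%:R = n%:R + 1 :> R by rewrite natr1.
have n2E : n.+2%:R = n%:R + 1 + 1 :> R by rewrite !natr1.
set c := (n.+1%:R)^-1 in n1_inv *; rewrite n2E; rewrite n1E in n1_inv.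
by case: eqP => _ /=; nra.
Qed.

Lemma simplex_frame_unit : simplex_frame \in unitmx.
Proof.
have a_neq0 : (n.+2%:R / n.+1%:R : R) != 0 by rewrite mulf_neq0 ?invr_eq0 ?pnatr_eq0.
case: (@mulmx1_unit _ _ simplex_frame
  (simplex_frame^T *m (1%:M + const_mx 1) *m (n.+2%:R / n.+1%:R)^-1%:M)) => //.
rewrite !mulmxA vertex_matrix_gram; last exact: widen_last_inj.
by rewrite simplex_gram_mul -scalar_mxM mulfV.
Qed.

Lemma simplex_dotv_eq0 c : (forall i, dotv (q i) c = 0) -> c = 0.
Proof.
move=> qc0; have frame_c : simplex_frame *m c^T = 0.
  apply/matrixP => i j; rewrite (ord1 j) [RHS]mxE -(qc0 (widen_last i)) mxE dotvE.
  by apply: eq_bigr => l _; rewrite !mxE.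
by apply: trmx_inj; rewrite trmx0 -(mulKmx simplex_frame_unit c^T) frame_c mulmx0.
Qed.

Lemma simplex_form_eq (S T : 'M[R]_n.+1) :
  (forall i j, dotv (q i *m S) (q j) = dotv (q i *m T) (q j)) -> S = T.
Proof.
move=> ST; have frame_tr_unit : simplex_frame^T \in unitmx.
  by rewrite unitmx_tr simplex_frame_unit.
have gramST : simplex_frame *m S *m simplex_frame^T = simplex_frame *m T *m simplex_frame^T.
  apply/matrixP => i j; rewrite !mulmx_trmxE !row_mul !row_vertex_matrix; exact: ST.
have frameST : simplex_frame *m S = simplex_frame *m T.
  by rewrite -(mulmxK frame_tr_unit (simplex_frame *m S)) gramST mulmxK.
by rewrite -(mulKmx simplex_frame_unit S) frameST (mulKmx simplex_frame_unit).
Qed.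

Lemma regular_simplex_perm_last (s : {perm 'I_n.+2}) :
  q (s ord_max) = - \sum_(i < n.+1) q (s (widen_last i)).
Proof.
have : \sum_i q (s i) = 0.
  by rewrite -[RHS]regular_simplex_sum [in RHS](reindex_inj (@perm_inj _ s)).
by rewrite big_ord_recr /= => /eqP; rewrite addrC addr_eq0 => /eqP.
Qed.

Definition simplex_rotation (s : {perm 'I_n.+2}) : 'M[R]_n.+1 :=
  invmx simplex_frame *m vertex_matrix (fun i => s (widen_last i)).

Lemma simplex_rotationE s i : q i *m simplex_rotation s = q (s i).
Proof.
have frameE j : q (widen_last j) *m simplex_rotation s = q (s (widen_last j)).
  rewrite -row_vertex_matrix -row_mul mulmxA mulmxV ?simplex_frame_unit //.
  by rewrite mul1mx row_vertex_matrix.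
have [->|[j ->]] := ord_last_or_widen i; last exact: frameE.
rewrite -[in LHS](perm1 ord_max) !regular_simplex_perm_last mulNmx mulmx_suml.
by congr (- _); apply: eq_bigr => j _; rewrite perm1 frameE.
Qed.

Lemma simplex_rotation_orthogonal s : simplex_rotation s *m (simplex_rotation s)^T = 1%:M.
Proof.
have s_inj : injective (fun i => s (widen_last i)) by move=> i j /perm_inj/widen_last_inj.
rewrite /simplex_rotation trmx_mul mulmxA -(mulmxA (invmx _)) vertex_matrix_gram //.
rewrite -(vertex_matrix_gram widen_last_inj) mulmxA mulVmx ?simplex_frame_unit // mul1mx.
by rewrite -trmx_mul mulVmx ?simplex_frame_unit // trmx1.
Qed.

Lemma fix_vertices_eq1 X : (forall i, q i *m X = q i) -> X = 1%:M.
Proof.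
move=> qX; have frameX : simplex_frame *m X = simplex_frame.
  by apply/row_matrixP => i; rewrite row_mul row_vertex_matrix qX.
by rewrite -(mulKmx simplex_frame_unit X) frameX mulVmx ?simplex_frame_unit.
Qed.

Lemma simplex_sym_order3 (s : {perm 'I_n.+2}) :
  (forall i, s (s (s i)) = i) -> simplex_sym q (simplex_rotation s).
Proof.
move=> s3; have M3 : simplex_rotation s *m simplex_rotation s *m simplex_rotation s = 1%:M.
  apply: fix_vertices_eq1 => i.
  by rewrite (mulmxA (q i)) (mulmxA (q i)) !simplex_rotationE s3.
set M := simplex_rotation s in M3 *.
have det3 : \det M * \det M * \det M = 1 by rewrite -!det_mulmx M3 det1.
have det2 := congr1 determinant (simplex_rotation_orthogonal s).
rewrite det_mulmx det_tr det1 in det2.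
split; first by split; [exact: simplex_rotation_orthogonal | rewrite -det3 -mulrA det2 mulr1].
apply/seteqP; split => x /=.
  by case=> y [i _ <-] <-; exists (s i) => //; rewrite simplex_rotationE.
case=> i _ <-; exists (q ((s^-1)%g i)); first by exists ((s^-1)%g i).
by rewrite simplex_rotationE permKV.
Qed.

End RegularSimplex.

Section InvariantForms.
Variables (R : realType) (n : nat) (q : 'I_n.+2 -> 'rV[R]_n.+1).
Hypotheses (hn : (2 <= n)%N) (hq : regular_simplex q).

Definition cycle3_invariant (F : 'rV[R]_n.+1 -> R) :=
  forall a b c, a != b -> a != c -> b != c ->
  forall x, F (x *m simplex_rotation q (cycle3 a b c)) = F x.

Lemma simplex_symmetric_cycle3_invariant h :
  simplex_symmetric q h -> cycle3_invariant (peval h).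
Proof.
move=> h_sym a b c ab ac bc x; apply: h_sym.
by apply: simplex_sym_order3 => //; exact: cycle3_order3.
Qed.

Lemma cycle3_invariant_linear_form c : cycle3_invariant (fun x => dotv x c) -> c = 0.
Proof.
move=> c_inv; pose f i := dotv (q i) c.
have f_const : forall i j, f i = f j.
  apply: cycle3_invariant_const; first by rewrite ltnS ltnW.
  by move=> a b c' ab ac bc i; rewrite /f -simplex_rotationE // c_inv.
have : \sum_(i < n.+2) f ord0 = 0.
  rewrite -[RHS](dot0v c) -(regular_simplex_sum hq) dotv_suml.
  by apply: eq_bigr => i _; rewrite (f_const ord0 i).
rewrite sumr_const card_ord => /eqP; rewrite mulrn_eq0 /= => /eqP f0.
by apply: (simplex_dotv_eq0 hq) => i; rewrite -/(f i) (f_const i ord0).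
Qed.

(* The symmetrised form B is invariant, so B(q_i, q_j) takes one value a on the diagonal and
   one value b off it; B(q_i, sum_j q_j) = 0 forces b = -a/(n+1), i.e. B = a <.,.>. *)
Lemma cycle3_invariant_quadratic_form A :
  cycle3_invariant (fun x => dotv (x *m A) x) -> exists a, A + A^T = a%:M.
Proof.
move=> A_inv; set S := A + A^T; pose g i j := dotv (q i *m S) (q j).
have S_sym : S^T = S by rewrite /S raddfD /= trmxK addrC.
have g_sym i j : g i j = g j i by rewrite /g -[in LHS]S_sym dotv_mul_trmx.
have g_inv a b c : a != b -> a != c -> b != c ->
    forall i j, g (cycle3 a b c i) (cycle3 a b c j) = g i j.
  by move=> ab ac bc i j; rewrite /g -!(simplex_rotationE hq) !dotv_polarize -mulmxDl !A_inv.
have g_diag i : g i i = g ord0 ord0.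
  apply: (cycle3_invariant_const (f := fun i => g i i)); first by rewrite ltnS ltnW.
  by move=> a b c ab ac bc j; exact: g_inv.
have g_offdiag i j : i != j -> g i j = g ord0 ord_max.
  by move=> ij; apply: cycle3_invariant_offdiag => //; rewrite ?ltnS // -val_eqE.
have g_offdiagE : g ord0 ord_max = g ord0 ord0 * - (n.+1%:R)^-1.
  have : \sum_j g ord0 j = 0 by rewrite /g -dotv_sumr (regular_simplex_sum hq) dotvC dot0v.
  rewrite (bigD1 ord0) //= (eq_bigr (fun _ => g ord0 ord_max)) => [|j j0]; last first.
    by apply: g_offdiag; rewrite eq_sym.
  rewrite sumr_const cardC1 card_ord /= -[_ *+ n.+1]mulr_natr => sum0.
  have n1_neq0 : (n.+1%:R : R) != 0 by rewrite pnatr_eq0.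
  by apply: (mulIf n1_neq0); rewrite mulrN mulNr -mulrA mulVf // mulr1; lra.
exists (g ord0 ord0); apply: (simplex_form_eq hq) => i j.
rewrite mul_mx_scalar dotvZl hq; case: eqP => [->|/eqP ij].
  by rewrite mulr1 -(g_diag j).
by rewrite -/(g i j) g_offdiag.
Qed.

Lemma cycle3_invariant_traceless_form A :
  cycle3_invariant (fun x => dotv (x *m A) x) -> \tr A = 0 -> A + A^T = 0.
Proof.
move=> /cycle3_invariant_quadratic_form [a SE] trA.
have : \tr (A + A^T) = 0 by rewrite mxtraceD mxtrace_tr trA addr0.
by rewrite SE mxtrace_scalar => /eqP; rewrite mulrn_eq0 /= => /eqP a0; rewrite a0 raddf0.
Qed.

End InvariantForms.

Lemma int_unit_ball_mpolyC (R : realType) k (c : R) :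
  int_unit_ball (c%:MP : {mpoly R[k]}) = c * ball_volume k 1.
Proof.
rewrite /int_unit_ball -ball_integral_cst; congr ball_integral.
by apply: funext => s; exact: mevalC.
Qed.

Unset Implicit Arguments.

Theorem lemma8p2 (R : realType) (n : nat) (hn : (2 <= n)%N)
  (q : 'I_n.+2 -> 'rV[R]_n.+1) (hq : regular_simplex q)
  (h : mpoly.mpoly n.+1 R) (d : nat) :
  h != 0 ->
  homog_poly d h ->
  harmonic_poly h ->
  simplex_symmetric q h ->
  int_unit_ball h = 0 ->
  (3 <= d)%N.
Proof.
move=> h_neq0 h_homog h_harm h_sym h_int.
have h_inv := simplex_symmetric_cycle3_invariant hq h_sym.
rewrite leqNgt; apply/negP; case: d h_homog => [|[|[|//]]] h_homog _.
- have [c hE] := homog0_mpolyC h_homog.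
  move: h_int; rewrite hE int_unit_ball_mpolyC; apply/eqP.
  apply: mulf_neq0; first by move: h_neq0; rewrite hE mpolyC_eq0.
  by rewrite lt0r_neq0 ?ball_volume_gt0.
- have [c hE] := homog1_linear h_homog.
  have c0 : c = 0.
    by apply: (cycle3_invariant_linear_form hn hq) => a b c' ab ac bc x;
      rewrite -!peval_linear -hE h_inv.
  by move: h_neq0; rewrite hE c0 linear_mpoly0 eqxx.
- have [A hE] := homog2_quadratic h_homog.
  have A_skew : A + A^T = 0.
    apply: (cycle3_invariant_traceless_form hn hq).
      by move=> a b c ab ac bc x; rewrite -!peval_quadratic -hE h_inv.
    by apply: harmonic_quadratic_trace; rewrite -hE.
  by move: h_neq0; rewrite hE quadratic_mpoly_skew ?eqxx.
Qed.
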